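(* Let $S$ be a numerical semigroup with minimal generators $g_1<\dots<g_\nu$ whose Apéry set is $\gamma$-rectangular. Then there exist non-negative integers $\lambda_{i,j}$ ($2\le i\le\nu$, $1\le j\le\nu$) with $$(\gamma_i+1)g_i=\lambda_{i,1}g_1+\lambda_{i,2}g_2+\dots+\lambda_{i,\nu}g_\nu\quad (i=2,\dots,\nu),$$ and a permutation $\sigma$ of $\{1,\dots,\nu\}$ with $\sigma(1)=1$ such that $\lambda_{\sigma(i),\sigma(j)}=0$ whenever $2\le i\le j\le\nu$.
   Context: A numerical semigroup is a submonoid $S$ of $(\mathbb N,+)$ with finite complement in $\mathbb N$; $g_1<\dots<g_\nu$ is its minimal system of generators and $m=g_1$ its multiplicity. $\mathrm{Ap}(S)=\{s\in S: s-m\notin S\}$. A representation of $s\in S$ is an expression $s=\sum_{i=1}^\nu\lambda_ig_i$, $\lambda_i\in\mathbb N$; $\mathrm{ord}(s)$ is the maximum of $\sum\lambda_i$ over all representations, and a representation is maximal if $\sum\lambda_i=\mathrm{ord}(s)$. For $i=2,\dots,\nu$, $\gamma_i=\max\{h\in\mathbb N: hg_i\in\mathrm{Ap}(S),\ \mathrm{ord}(hg_i)=h,\ \text{and } hg_i \text{ has a unique maximal representation}\}$. $\mathrm{Ap}(S)$ is $\gamma$-rectangular if $\mathrm{Ap}(S)=\{\sum_{i=2}^\nu\lambda_ig_i: 0\le\lambda_i\le\gamma_i\}$. *)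

From mathcomp Require Import all_boot all_fingroup.
Set Implicit Arguments. Unset Strict Implicit. Unset Printing Implicit Defensive.

(* Generators are indexed by 'I_nu (index k here = index k+1 in the paper). *)
Section NS.
Variable nu : nat.

Definition numerical_semigroup (S : pred nat) : Prop :=
  S 0 /\ (forall a b, S a -> S b -> S (a + b)) /\
  exists N, forall n, N <= n -> S n.

Definition is_rep (g : 'I_nu -> nat) (lam : 'I_nu -> nat) (s : nat) : Prop :=
  \sum_(i < nu) lam i * g i = s.

Definition size_rep (lam : 'I_nu -> nat) : nat := \sum_(i < nu) lam i.

Definition minimal_generators (S : pred nat) (g : 'I_nu -> nat) : Prop :=
  (forall i j : 'I_nu, i < j -> g i < g j) /\
  (forall s, S s <-> exists lam, is_rep g lam s) /\
  (forall i : 'I_nu, ~ exists lam, lam i = 0 /\ is_rep g lam (g i)).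

Definition is_ord (g : 'I_nu -> nat) (s h : nat) : Prop :=
  (exists lam, is_rep g lam s /\ size_rep lam = h) /\
  (forall lam, is_rep g lam s -> size_rep lam <= h).

Definition unique_max_rep (g : 'I_nu -> nat) (s h : nat) : Prop :=
  forall lam mu, is_rep g lam s -> is_rep g mu s ->
    size_rep lam = h -> size_rep mu = h -> forall i, lam i = mu i.

Definition apery (S : pred nat) (m s : nat) : Prop :=
  S s /\ ~ (m <= s /\ S (s - m)).

Definition gamma_set (S : pred nat) (m : nat) (g : 'I_nu -> nat) (i : 'I_nu)
    (h : nat) : Prop :=
  apery S m (h * g i) /\ is_ord g (h * g i) h /\ unique_max_rep g (h * g i) h.

Definition is_gamma (S : pred nat) (m : nat) (g : 'I_nu -> nat) (i : 'I_nu)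
    (c : nat) : Prop :=
  gamma_set S m g i c /\ (forall h, gamma_set S m g i h -> h <= c).

End NS.

Definition gamma_rectangular n (S : pred nat) (g : 'I_n.+1 -> nat)
    (gam : 'I_n.+1 -> nat) : Prop :=
  forall s, apery S (g ord0) s <->
    exists lam : 'I_n.+1 -> nat,
      lam ord0 = 0 /\ (forall i, i != ord0 -> lam i <= gam i) /\ is_rep g lam s.

From mathcomp Require Import all_boot all_fingroup.
From mathcomp Require Import ssralg ssrnum poly algC cyclotomic.
From mathcomp Require Import zify.
From Stdlib Require Import Classical.
Import GRing.Theory Num.Theory.
Set Implicit Arguments. Unset Strict Implicit. Unset Printing Implicit Defensive.

(* Notation: generators are g_0 < ... < g_n (index 0 is the paper's g_1), and
   m = g_0 is the multiplicity.  Write B for the "box" of vectors lam with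
   lam_0 = 0 and lam_i <= gamma_i, and wsum lam = sum_i lam_i g_i.

   Every residue class mod m contains exactly one element
      of Ap(S), namely the least element of S in that class.
   2. Rectangularity.  The "staircase" vector
      (0, gamma_1, ..., gamma_(k-1), gamma_k + 1, 0, ..., 0) never lands in
      Ap(S): by induction on k, using the maximality of gamma_k.  A
      lexicographic comparison then shows that wsum is injective on B, so B
      is in bijection with Ap(S), i.e. with the residues mod m, and
      m = prod_(i > 0) (gamma_i + 1).
   3. Roots of unity.  For a set C of indices, the sum of z^(wsum lam) over
      the box vectors supported on C is prod_(i in C) (1 + z^g_i + ... +
      z^(gamma_i g_i)); over the whole box it vanishes when z^m = 1 <> z.
   4. Greedy step.  Suppose the indices of C are already placed and
      P = prod_(i notin C) (gamma_i + 1) divides g_i for i in C.  For z a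
      primitive P-th root of unity the factors of C equal gamma_i + 1 <> 0, so
      some factor j notin C vanishes and P | (gamma_j + 1) g_j.  Hence j can be
      appended to C, and, counting residues, (gamma_j + 1) g_j is written
      using g_0 and the g_i with i in C only.
   5. Iterating the step orders all generators; that order is sigma. *)

Lemma ord_neq0 n (i : 'I_n.+1) : (i != ord0) = (0 < i).
Proof. by rewrite -(inj_eq val_inj) lt0n. Qed.

(* The multiples of d below m; for d dividing m they are the residues mod m
   divisible by d, which is the counting used in the greedy step. *)
Definition multiples_below d m := [seq d * i | i <- iota 0 (m %/ d)].

Lemma size_multiples_below d m : size (multiples_below d m) = m %/ d.
Proof. by rewrite size_map size_iota. Qed.

Lemma mod_in_multiples d m y : 0 < m -> 0 < d -> d %| m -> d %| y ->
  y %% m \in multiples_below d m.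
Proof.
move=> m0 d0 dm dy; have dr : d %| y %% m.
  by move: dy; rewrite {1}(divn_eq y m) dvdn_addr // dvdn_mull.
apply/mapP; exists (y %% m %/ d); last by rewrite mulnC divnK.
by rewrite mem_iota add0n /= ltn_divRL // divnK // ltn_pmod.
Qed.

Section Apery.
Variables (n : nat) (S : pred nat) (g : 'I_n.+1 -> nat).
Hypothesis HS : numerical_semigroup S.
Hypothesis Hg : minimal_generators S g.

Local Notation m := (g ord0).
Local Notation ap := (apery S (g ord0)).
Implicit Types f h lam : 'I_n.+1 -> nat.

Definition wsum f := \sum_(i < n.+1) f i * g i.

Lemma wsum_in f : S (wsum f).
Proof. by case: Hg => _ [H _]; apply/H; exists f. Qed.

Lemma S_add a b : S a -> S b -> S (a + b).
Proof. by case: HS => _ [H _]; apply: H. Qed.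

Lemma wsum_ext f h : (forall i, f i = h i) -> wsum f = wsum h.
Proof. by move=> E; apply: eq_bigr => i _; rewrite E. Qed.

Lemma wsumD f h : wsum (fun i => f i + h i) = wsum f + wsum h.
Proof. by rewrite /wsum -big_split; apply: eq_bigr => i _; rewrite mulnDl. Qed.

Lemma wsum_subK f h : (forall i, h i <= f i) ->
  wsum f = wsum (fun i => f i - h i) + wsum h.
Proof. by move=> le; rewrite -wsumD; apply: wsum_ext => i; rewrite subnK. Qed.

Lemma size_rep_subK f h : (forall i, h i <= f i) ->
  size_rep f = size_rep (fun i => f i - h i) + size_rep h.
Proof.
by move=> le; rewrite /size_rep -big_split; apply: eq_bigr => i _ /=; rewrite subnK.
Qed.

Lemma size_rep_ext f h : (forall i, f i = h i) -> size_rep f = size_rep h.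
Proof. by move=> E; apply: eq_bigr => i _; rewrite E. Qed.

Definition single (k : 'I_n.+1) c := fun i : 'I_n.+1 => if i == k then c else 0.

Lemma wsum_single k c : wsum (single k c) = c * g k.
Proof. by rewrite /wsum (bigD1 k) //= big1 ?addn0 /single ?eqxx // => i /negPf ->. Qed.

Lemma size_single k c : size_rep (single k c) = c.
Proof. by rewrite /size_rep (bigD1 k) //= big1 ?addn0 /single ?eqxx // => i /negPf ->. Qed.

Lemma single1_le f k : 0 < f k -> forall i, single k 1 i <= f i.
Proof. by move=> pos i; rewrite /single; case: eqP => // ->. Qed.

Lemma S_mul_gen c k : S (c * g k).
Proof. by rewrite -wsum_single; apply: wsum_in. Qed.

(* m is not 0, otherwise it would be a redundant generator. *)
Lemma m_pos : 0 < m.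
Proof.
case: Hg => _ [_ H]; rewrite lt0n; apply/negP => /eqP m0; apply: (H ord0).
by exists (fun _ => 0); split => //; rewrite /is_rep m0 big1.
Qed.

Lemma apery_sub f h : (forall i, h i <= f i) -> ap (wsum f) -> ap (wsum h).
Proof.
move=> le [_ Hf]; split=> [|[Hm Sm]]; first exact: wsum_in.
apply: Hf; rewrite (wsum_subK le); split; first exact: leq_trans (leq_addl _ _).
by rewrite -addnBA //; apply: S_add => //; apply: wsum_in.
Qed.

Lemma apery_rep0 s lam : ap s -> is_rep g lam s -> lam ord0 = 0.
Proof.
move=> [_ Hs] rep; apply/eqP/negP => /negP; rewrite -lt0n => pos; apply: Hs.
have := wsum_subK (single1_le pos); rewrite wsum_single mul1n [wsum lam]rep => ->.
by rewrite addnK leq_addl; split => //; apply: wsum_in.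
Qed.

Lemma apery_eq_mod x y : ap y -> S x -> x <= y -> m %| y - x -> x = y.
Proof.
move=> [Sy Hy] Sx le dv; case: (eqVneq x y) => // ne; exfalso.
have := divnK dv; set k := (y - x) %/ m => Ek.
have k1 : 0 < k by case: k Ek => [|k'] //= Ek; move: ne le Ek; lia.
apply: Hy; split.
  by apply: leq_trans (leq_subr x y); rewrite -Ek leq_pmull.
have -> : y - m = x + k.-1 * m.
  by case: k Ek k1 => // k' Ek _ /=; move: Ek; rewrite mulSn; lia.
exact: S_add (S_mul_gen _ _).
Qed.

Lemma apery_least x s : ap x -> S s -> s %% m = x %% m -> x <= s /\ m %| s - x.
Proof.
move=> ax Ss E; case: (leqP x s) => [xs|sx]; first by rewrite -eqn_mod_dvd // E.
have dv : m %| x - s by rewrite -eqn_mod_dvd ?E // ltnW.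
by move: (sx); rewrite (apery_eq_mod ax Ss (ltnW sx) dv) ltnn.
Qed.

Lemma apery_uniq x y : ap x -> ap y -> x %% m = y %% m -> x = y.
Proof.
move=> ax ay E; have [le dv] := apery_least ax (proj1 ay) (esym E).
exact: apery_eq_mod ay (proj1 ax) le dv.
Qed.

Lemma apery_exists r : r < m -> exists x, ap x /\ x %% m = r.
Proof.
move=> rm; case: HS => _ [_ [N HN]].
pose P x := S x && (x %% m == r).
have exP : exists x, P x.
  exists (r + m * N); apply/andP; split; first by apply: HN; have := m_pos; nia.
  by rewrite mulnC addnC modnMDl modn_small.
case: (ex_minnP exP) => x /andP[Sx /eqP xr] xmin.
exists x; split => //; split => // [[mx Sxm]].
have : P (x - m) by rewrite /P Sxm /= -xr -{2}(subnK mx) modnDr.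
by move/xmin; have := m_pos; lia.
Qed.

Lemma wsum_above f (k : 'I_n.+1) : (forall i : 'I_n.+1, 0 < f i -> k < i) ->
  size_rep f * (g k).+1 <= wsum f.
Proof.
move=> supp; rewrite /size_rep big_distrl /=; apply: leq_sum => i _.
case: (posnP (f i)) => [->|p]; first by rewrite !mul0n.
by rewrite leq_mul2l; case: Hg => Hi _; rewrite Hi ?orbT ?supp.
Qed.

Lemma gen_apery j : j != ord0 -> ap (g j).
Proof.
move=> j0; case: Hg => _ [gen ind].
split=> [|[mj Sgm]]; first by rewrite -[g j]mul1n S_mul_gen.
have [kap rk] := (gen _).1 Sgm; rewrite /is_rep -/(wsum kap) in rk.
have kj : kap j = 0.
  apply/eqP; apply: contraT; rewrite -lt0n => kpos.
  have : kap j * g j <= wsum kap by rewrite /wsum (bigD1 j) //= leq_addr.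
  have : g j <= kap j * g j by rewrite leq_pmull.
  by have := m_pos; rewrite rk; lia.
apply: (ind j); exists (fun i => kap i + single ord0 1 i); split.
  by rewrite /single (negPf j0) addn0.
by rewrite /is_rep -/(wsum _) wsumD wsum_single mul1n rk subnK.
Qed.

Section Rectangular.
Variable gam : 'I_n.+1 -> nat.
Hypothesis Hgam : forall i : 'I_n.+1, i != ord0 -> is_gamma S m g i (gam i).
Hypothesis Hrect : gamma_rectangular S g gam.

Definition in_box f := f ord0 = 0 /\ forall i, i != ord0 -> f i <= gam i.

Lemma in_box_apery f : in_box f -> ap (wsum f).
Proof. by move=> [H0 H]; apply/Hrect; exists f. Qed.

(* gamma_j >= 1: otherwise rectangularity would leave g_j out of Ap(S). *)
Lemma gam_pos j : j != ord0 -> 0 < gam j.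
Proof.
move=> j0; have [lam [_ [lb rep]]] := (Hrect (g j)).1 (gen_apery j0).
rewrite lt0n; apply/negP => /eqP g0; move: (lb j j0); rewrite g0 leqn0 => /eqP lj.
by case: Hg => _ [_ ind]; apply: (ind j); exists lam.
Qed.

(* A representation of order >= gamma_k + 1 of (gamma_k + 1) g_k that uses g_k
   is the trivial one: removing one g_k leaves a maximal representation of
   gamma_k g_k, which is unique. *)
Lemma succ_rep_single (k : 'I_n.+1) lam : k != ord0 ->
  is_rep g lam ((gam k).+1 * g k) -> (gam k).+1 <= size_rep lam -> 0 < lam k ->
  forall i, lam i = single k (gam k).+1 i.
Proof.
move=> k0 rep sz lk; have [[_ [[_ ordg] ung]] _] := Hgam k0.
have E1 := wsum_subK (single1_le lk); have E2 := size_rep_subK (single1_le lk).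
rewrite wsum_single mul1n in E1; rewrite size_single in E2.
set lam' := (fun i => lam i - single k 1 i) in E1 E2.
have rep' : is_rep g lam' (gam k * g k).
  by rewrite /is_rep -/(wsum _); move: rep; rewrite /is_rep -/(wsum _) E1 mulSn; lia.
have sz' : size_rep lam' = gam k by have := ordg _ rep'; lia.
have rep1 : is_rep g (single k (gam k)) (gam k * g k).
  by rewrite /is_rep -/(wsum _) wsum_single.
move=> i; have := ung _ _ rep' rep1 sz' (size_single _ _) i.
by rewrite /lam' /single; case: eqP => [->|_]; lia.
Qed.

(* If (gamma_k + 1) g_k were in Ap(S), the maximality of gamma_k forces a
   representation of order >= gamma_k + 1 avoiding g_k. *)
Lemma gamma_succ_rep (k : 'I_n.+1) : k != ord0 -> ap ((gam k).+1 * g k) ->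
  exists nu, [/\ is_rep g nu ((gam k).+1 * g k), (gam k).+1 <= size_rep nu & nu k = 0].
Proof.
move=> k0 apk; apply: NNPP => Hno.
have key lam : is_rep g lam ((gam k).+1 * g k) -> (gam k).+1 <= size_rep lam ->
    forall i, lam i = single k (gam k).+1 i.
  move=> rep sz; apply: succ_rep_single => //; rewrite lt0n.
  by apply/negP => /eqP lk; apply: Hno; exists lam.
have rep1 : is_rep g (single k (gam k).+1) ((gam k).+1 * g k).
  by rewrite /is_rep -/(wsum _) wsum_single.
have [_ Hmax] := Hgam k0.
suff gs : gamma_set S m g k (gam k).+1 by have := Hmax _ gs; rewrite ltnn.
split=> //; split.
  split=> [|lam rep]; first by exists (single k (gam k).+1); rewrite size_single.
  rewrite leqNgt; apply/negP => lt.
  by have := size_rep_ext (key lam rep (ltnW lt)); rewrite size_single; lia.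
move=> lam mu rl rm sl sm i.
by rewrite (key lam rl) ?sl // (key mu rm) ?sm.
Qed.

Definition stair (k : 'I_n.+1) := fun j : 'I_n.+1 =>
  if (0 < j) && (j < k) then gam j else if j == k then (gam k).+1 else 0.

(* Inductive step: replace (gamma_k + 1) g_k by the representation given by
   gamma_succ_rep.  If it uses some g_i with 0 < i < k we dominate an earlier
   staircase; otherwise it only uses generators above g_k and is too large. *)
Lemma stair_step (k : 'I_n.+1) :
  (forall k' : 'I_n.+1, k' < k -> k' != ord0 -> ~ ap (wsum (stair k'))) ->
  k != ord0 -> ~ ap (wsum (stair k)).
Proof.
move=> IH k0 apk.
have apg : ap ((gam k).+1 * g k).
  rewrite -wsum_single; apply: (apery_sub _ apk) => i; rewrite /single /stair.
  by case: eqP => [->|//]; rewrite ltnn andbF.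
have [nu [rep sz nuk]] := gamma_succ_rep k0 apg.
have nu0 : nu ord0 = 0 := apery_rep0 apg rep.
pose low (j : 'I_n.+1) := if (0 < j) && (j < k) then gam j else 0.
have E : wsum (stair k) = wsum (fun j => low j + nu j).
  rewrite wsumD; move: rep; rewrite /is_rep -/(wsum nu) => ->; rewrite -wsum_single -wsumD.
  apply: wsum_ext => j; rewrite /stair /low /single; case: ifP => [/andP[_ jk]|_].
    by case: eqP jk => [->|_]; rewrite ?ltnn ?addn0.
  by case: eqP.
case: (boolP [exists i : 'I_n.+1, [&& 0 < i, i < k & 0 < nu i]]).
  case/existsP => i /and3P[i0 ik nui]; apply: (IH i ik); first by rewrite -lt0n.
  apply: (apery_sub _ (_ : ap (wsum (fun j => low j + nu j)))); last by rewrite -E.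
  move=> j; rewrite /stair /low.
  case: (boolP ((0 < j) && (j < i))) => [/andP[j0 ji]|_].
    by rewrite j0 (ltn_trans ji ik) leq_addr.
  by case: eqP => [->|_] //; rewrite i0 ik /=; lia.
rewrite negb_exists => /forallP noLow.
have supp : forall i : 'I_n.+1, 0 < nu i -> k < i.
  move=> i nui; have := noLow i; rewrite nui andbT.
  case: (posnP i) => [i0|ipos].
    by move: nui; rewrite (_ : i = ord0) ?nu0 //; apply: val_inj.
  rewrite /= -leqNgt leq_eqVlt => /orP[/eqP ki|//].
  by move: nui; rewrite (_ : i = k) ?nuk //; apply: val_inj.
have := wsum_above supp; move: rep; rewrite /is_rep -/(wsum nu) => ->; nia.
Qed.

Lemma stair_not_apery (k : 'I_n.+1) : k != ord0 -> ~ ap (wsum (stair k)).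
Proof.
suff ind K : forall k : 'I_n.+1, k < K -> k != ord0 -> ~ ap (wsum (stair k)).
  exact: (ind n.+1).
elim: K => // K IHK k' kK; apply: stair_step => k'' lt; apply: IHK.
exact: leq_trans lt kK.
Qed.

Definition corner := fun j : 'I_n.+1 => if j == ord0 then 0 else gam j.

Lemma corner_in_box : in_box corner.
Proof. by rewrite /in_box /corner eqxx; split => // i /negPf ->. Qed.

Lemma in_box_le_corner f : in_box f -> forall j, f j <= corner j.
Proof.
by move=> [f0 fb] j; rewrite /corner; case: eqP => [->|/eqP]; [rewrite f0|apply: fb].
Qed.

(* Two box vectors with equal values agree below i and differ at i: then
   corner - f + h is in Ap(S) (it has the value of corner) and dominates
   stair i, contradicting stair_not_apery. *)
Lemma box_lex_step f h (i : 'I_n.+1) : in_box f -> in_box h -> wsum f = wsum h ->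
  (forall j : 'I_n.+1, j < i -> f j = h j) -> ~ f i < h i.
Proof.
move=> bf bh E lt fi.
have i0 : i != ord0 by apply/eqP => i0; move: fi; rewrite i0 bf.1 bh.1.
pose u := fun j => corner j - f j + h j.
have Eu : wsum u = wsum corner.
  by rewrite wsumD -E -wsumD; apply: wsum_ext => j; rewrite subnK // in_box_le_corner.
apply: (stair_not_apery i0); apply: (apery_sub _ (_ : ap (wsum u))).
  move=> j; rewrite /stair /u /corner.
  case: (boolP ((0 < j) && (j < i))) => [/andP[j0 ji]|_].
    have j0' : j != ord0 by rewrite ord_neq0.
    by rewrite (negPf j0') (lt j ji) subnK // bh.2.
  by case: eqP => [->|_] //; rewrite (negPf i0); have := bf.2 i i0; lia.
by rewrite Eu; apply: in_box_apery corner_in_box.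
Qed.

Lemma box_inj f h : in_box f -> in_box h -> wsum f = wsum h -> forall i, f i = h i.
Proof.
move=> bf bh E; suff ind K : forall i : 'I_n.+1, i < K -> f i = h i.
  by move=> i; apply: (ind n.+1).
elim: K => // K IH i iK.
have lt (j : 'I_n.+1) : j < i -> f j = h j by move=> ji; apply: IH; apply: leq_trans ji _.
case: (ltngtP (f i) (h i)) => // c; exfalso.
  exact: (box_lex_step bf bh E lt c).
by apply: (box_lex_step bh bf (esym E) _ c) => j /lt.
Qed.

Definition upd (f : {ffun 'I_n.+1 -> nat}) (i : 'I_n.+1) t :=
  [ffun j => if j == i then t else f j].

Fixpoint box_vecs (C : seq 'I_n.+1) : seq {ffun 'I_n.+1 -> nat} :=
  if C is i :: C' then
    [seq upd f i t | f : {ffun 'I_n.+1 -> nat} <- box_vecs C', t <- iota 0 (gam i).+1]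
  else [:: [ffun => 0]].

Lemma box_vecs_cons i C : box_vecs (i :: C) =
  [seq upd f i t | f : {ffun 'I_n.+1 -> nat} <- box_vecs C, t <- iota 0 (gam i).+1].
Proof. by []. Qed.

Lemma box_vecsP C (f : {ffun 'I_n.+1 -> nat}) :
  f \in box_vecs C <-> (forall j, j \notin C -> f j = 0) /\ (forall j, f j <= gam j).
Proof.
elim: C f => [|i C IH] f.
  rewrite /= inE; split=> [/eqP ->|[H _]]; first by split => j; rewrite ffunE.
  by apply/eqP/ffunP => j; rewrite ffunE H.
split=> [|[H1 H2]].
  case/allpairsP => [[f' t] [/IH[H1 H2] tin ->]] /=.
  split => j; rewrite ffunE; case: eqP => [->|ne].
  - by rewrite inE eqxx.
  - by rewrite inE negb_or => /andP[_ jC]; apply: H1.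
  - by move: tin; rewrite mem_iota add0n ltnS.
  - exact: H2.
apply/allpairsP; exists (upd f i 0, f i); split.
- apply/IH; split => j; rewrite ffunE; case: (eqVneq j i) => // ne.
  by move=> jC; apply: H1; rewrite inE negb_or ne.
- by rewrite mem_iota add0n ltnS H2.
- by apply/ffunP => j; rewrite !ffunE; case: eqP => [->|].
Qed.

Lemma box_vecs_uniq C : uniq C -> uniq (box_vecs C).
Proof.
elim: C => [|i C IH] // /andP[iC uC]; apply: allpairs_uniq => //.
- exact: IH.
- exact: iota_uniq.
move=> [f t] [f' t'] /allpairsPdep[a [b [ain bin [-> ->]]]].
move=> /allpairsPdep[a' [b' [ain' bin' [-> ->]]]] /= E.
have Ei : b = b' by have := congr1 (fun F : {ffun _ -> _} => F i) E; rewrite !ffunE eqxx.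
congr (_, _) => //; apply/ffunP => j.
have := congr1 (fun F : {ffun _ -> _} => F j) E; rewrite !ffunE.
by case: eqP => [->|] // _; rewrite ((box_vecsP C a).1 ain).1 // ((box_vecsP C a').1 ain').1.
Qed.

Lemma size_box_vecs C : size (box_vecs C) = \prod_(i <- C) (gam i).+1.
Proof.
elim: C => [|i C IH]; first by rewrite big_nil.
by rewrite box_vecs_cons size_allpairs size_iota IH big_cons mulnC.
Qed.

Lemma wsum_upd (f : {ffun 'I_n.+1 -> nat}) i t :
  f i = 0 -> wsum (upd f i t) = wsum f + t * g i.
Proof.
move=> fi; rewrite -wsum_single -wsumD; apply: wsum_ext => j; rewrite ffunE /single.
by case: eqP => [->|]; rewrite ?fi ?addn0.
Qed.

Definition gens := [seq i <- enum 'I_n.+1 | i != ord0].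

Lemma gens_uniq : uniq gens.
Proof. by apply: filter_uniq; apply: enum_uniq. Qed.

Lemma mem_gens i : (i \in gens) = (i != ord0).
Proof. by rewrite mem_filter mem_enum andbT. Qed.

Lemma size_gens : size gens = n.
Proof.
transitivity #|predC1 (ord0 : 'I_n.+1)|; last by rewrite cardC1 card_ord.
rewrite cardE /gens; congr size.
by rewrite /enum_mem -filter_predI; apply: eq_in_filter => i _; rewrite /= !inE andbT.
Qed.

Lemma box_vecs_in_box C (f : {ffun 'I_n.+1 -> nat}) :
  {subset C <= gens} -> f \in box_vecs C -> in_box f.
Proof.
move=> sC /box_vecsP[H1 H2]; split => [|i _]; last exact: H2.
by apply: H1; apply/negP => /sC; rewrite mem_gens eqxx.
Qed.

Lemma residue_inj C : {subset C <= gens} ->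
  {in box_vecs C &, injective (fun f : {ffun 'I_n.+1 -> nat} => wsum f %% m)}.
Proof.
move=> sC f h fin hin E; have bf := box_vecs_in_box sC fin.
have bh := box_vecs_in_box sC hin.
have Ef := apery_uniq (in_box_apery bf) (in_box_apery bh) E.
by apply/ffunP => i; apply: box_inj bf bh Ef i.
Qed.

Lemma box_residues :
  perm_eq [seq wsum f %% m | f : {ffun 'I_n.+1 -> nat} <- box_vecs gens] (iota 0 m).
Proof.
apply: uniq_perm => [||x].
- rewrite map_inj_in_uniq ?box_vecs_uniq ?gens_uniq //; exact: residue_inj.
- exact: iota_uniq.
rewrite mem_iota add0n /=; apply/mapP/idP => [[f _ ->]|xm].
  exact: ltn_pmod m_pos.
have [y [apy yx]] := apery_exists xm.
have [lam [l0 [lb rep]]] := (Hrect y).1 apy.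
exists [ffun j => lam j]; last first.
  by rewrite -yx -rep; congr (_ %% _); apply: eq_bigr => j _; rewrite ffunE.
apply/box_vecsP; split => j; rewrite ffunE; first by rewrite mem_gens negbK => /eqP ->.
by case: (eqVneq j ord0) => [->|ne]; [rewrite l0|exact: lb].
Qed.

(* The number of residues mod m is the number of box vectors. *)
Lemma m_prod : m = \prod_(i <- gens) (gam i).+1.
Proof. by have := perm_size box_residues; rewrite size_map size_iota size_box_vecs. Qed.

Definition geom (z : algC) (i : 'I_n.+1) :=
  (\sum_(t <- iota 0 (gam i).+1) z ^+ (t * g i))%R.

Lemma sum_box_vecs (z : algC) C : uniq C ->
  (\sum_(f <- box_vecs C) z ^+ wsum f = \prod_(i <- C) geom z i)%R.
Proof.
elim: C => [|i C IH].
  by move=> _; rewrite /= big_seq1 big_nil /wsum big1 // => j _; rewrite ffunE.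
move=> /andP[iC uC]; rewrite box_vecs_cons big_allpairs_dep /= big_cons -IH //.
rewrite mulrC big_distrl /=.
apply: eq_big_seq => f /box_vecsP[f0 _]; rewrite /geom big_distrr /=.
by apply: eq_bigr => t _; rewrite wsum_upd ?exprD ?f0.
Qed.

(* Since the box residues are all residues mod m, the full generating
   function vanishes at every m-th root of unity other than 1. *)
Lemma sum_box_vanish (z : algC) :
  (z ^+ m = 1 -> z != 1 -> \sum_(f <- box_vecs gens) z ^+ wsum f = 0)%R.
Proof.
move=> zm z1.
rewrite (eq_bigr (fun f : {ffun 'I_n.+1 -> nat} => z ^+ (wsum f %% m))%R); last first.
  by move=> f _; rewrite expr_mod.
rewrite -(big_map (fun f : {ffun 'I_n.+1 -> nat} => wsum f %% m) xpredT (fun x => z ^+ x)%R).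
rewrite (perm_big _ box_residues) (_ : iota 0 m = index_iota 0 m) ?big_mkord; last first.
  by rewrite /index_iota subn0.
have := subrX1 z m; rewrite zm subrr => /esym/eqP.
by rewrite mulf_eq0 subr_eq0 (negPf z1) => /eqP.
Qed.

Lemma geom_const (z : algC) d i : (d.-primitive_root z)%R -> d %| g i ->
  geom z i = ((gam i).+1)%:R%R.
Proof.
move=> zP dvd; rewrite /geom (eq_bigr (fun _ => 1%R)) => [|t _]; last first.
  by apply/eqP; rewrite -(prim_order_dvd zP) dvdn_mull.
by rewrite -[iota 0 _]/(index_iota 0 (gam i).+1) sumr_const_nat subn0.
Qed.

Lemma geom_root (z : algC) i : geom z i = 0%R -> (z ^+ ((gam i).+1 * g i) = 1)%R.
Proof.
move=> G0; have := subrX1 (z ^+ g i) (gam i).+1.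
have -> : (\sum_(t < (gam i).+1) (z ^+ g i) ^+ t = geom z i)%R.
  rewrite /geom -[iota 0 _]/(index_iota 0 (gam i).+1) big_mkord.
  by apply: eq_bigr => t _; rewrite -exprM mulnC.
by rewrite G0 mulr0 -exprM mulnC => /eqP; rewrite subr_eq0 => /eqP.
Qed.

Definition rest (C : seq 'I_n.+1) := [seq i <- gens | i \notin C].
Definition rest_prod (C : seq 'I_n.+1) := \prod_(i <- rest C) (gam i).+1.

Lemma perm_gens C : uniq C -> {subset C <= gens} -> perm_eq gens (C ++ rest C).
Proof.
move=> uC sC; rewrite perm_sym.
apply: perm_trans (_ : perm_eq ([seq i <- gens | i \in C] ++ rest C) _); last first.
  by rewrite perm_filterC.
rewrite perm_cat2r; apply: uniq_perm => [//||x]; first exact: filter_uniq gens_uniq.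
by rewrite mem_filter; case: (boolP (x \in C)) => // /sC ->.
Qed.

Lemma size_rest C : uniq C -> {subset C <= gens} -> size (rest C) = n - size C.
Proof.
move=> uC sC; have := perm_size (perm_gens uC sC); rewrite size_cat.
by have := size_gens; lia.
Qed.

Lemma rest_prod_rcons C j : j \in rest C ->
  rest_prod C = (gam j).+1 * rest_prod (rcons C j).
Proof.
move=> jR; rewrite /rest_prod (bigD1_seq j jR (filter_uniq _ gens_uniq)) /=; congr (_ * _).
rewrite /rest big_filter big_filter_cond; apply: eq_bigl => i.
by rewrite mem_rcons inE negb_or andbC.
Qed.

(* While some generator is unplaced, P > 1, so z = 1 is excluded below. *)
Lemma rest_prod_gt1 C : rest C != [::] -> 1 < rest_prod C.
Proof.
rewrite /rest_prod; case E: (rest C) => [//|i R] _; rewrite big_cons.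
have : i \in rest C by rewrite E mem_head.
rewrite mem_filter mem_gens => /andP[_ /gam_pos gi].
have : 0 < \prod_(k <- R) (gam k).+1 by apply: prodn_gt0.
nia.
Qed.

Section Greedy.
Variable C : seq 'I_n.+1.
Hypothesis uC : uniq C.
Hypothesis sC : {subset C <= gens}.
Hypothesis Cdvd : forall i, i \in C -> rest_prod C %| g i.

Lemma m_split : m = size (box_vecs C) * rest_prod C.
Proof.
by rewrite size_box_vecs {1}m_prod /rest_prod -big_cat; apply: perm_big; apply: perm_gens.
Qed.

(* Evaluating the generating function at a primitive P-th root of unity:
   the factors of C are nonzero, so the factor of some unplaced j vanishes. *)
Lemma rest_factor : rest C != [::] ->
  exists2 j, j \in rest C & rest_prod C %| (gam j).+1 * g j.
Proof.
move=> Rne; have [z zP] := C_prim_root_exists (ltnW (rest_prod_gt1 Rne)).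
have zm : (z ^+ m = 1)%R by apply/eqP; rewrite -(prim_order_dvd zP) m_split dvdn_mull.
have z1 : (z != 1)%R.
  apply: contraTneq (rest_prod_gt1 Rne) => z1.
  by have := prim_order_dvd zP 1; rewrite expr1 z1 eqxx dvdn1 => /eqP ->.
move: (sum_box_vanish zm z1); rewrite (sum_box_vecs _ gens_uniq).
rewrite (perm_big _ (perm_gens uC sC)) big_cat /= => /eqP; rewrite mulf_eq0.
case/orP; rewrite prodf_seq_eq0 => /hasP[i iCR /= /eqP Gi].
  by move: Gi; rewrite (geom_const zP (Cdvd iCR)) => /eqP; rewrite pnatr_eq0.
by exists i => //; rewrite (prim_order_dvd zP) geom_root.
Qed.

Lemma rest_prod_dvd_wsum (f : {ffun 'I_n.+1 -> nat}) :
  f \in box_vecs C -> rest_prod C %| wsum f.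
Proof.
move=> /box_vecsP[f0 _]; apply: dvdn_sum => i _.
case: (boolP (i \in C)) => [iC|iC]; first by rewrite dvdn_mull ?Cdvd.
by rewrite f0 // mul0n dvdn0.
Qed.

(* Counting: the m / P box vectors supported on C realise all the residues
   mod m divisible by P, so every element of S divisible by P is written
   with g_0 and the generators of C. *)
Lemma rest_prod_rep x : S x -> rest_prod C %| x ->
  exists mu, x = wsum mu /\ forall l, mu l != 0 -> (l == ord0) || (l \in C).
Proof.
move=> Sx dx; set P := rest_prod C.
have Ppos : 0 < P by apply: prodn_gt0.
have Pm : P %| m by rewrite m_split dvdn_mull.
pose s1 := [seq wsum f %% m | f : {ffun 'I_n.+1 -> nat} <- box_vecs C].
have us1 : uniq s1 by rewrite map_inj_in_uniq ?box_vecs_uniq //; apply: residue_inj.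
have ss12 : {subset s1 <= multiples_below P m}.
  by move=> y /mapP[f fin ->]; apply: mod_in_multiples m_pos Ppos Pm (rest_prod_dvd_wsum fin).
have sz : size (multiples_below P m) <= size s1.
  by rewrite size_multiples_below size_map {1}m_split mulnK.
have /mapP[f fin fx] : x %% m \in s1.
  by rewrite (uniq_min_size us1 ss12 sz).2 mod_in_multiples ?m_pos.
have [le dvm] := apery_least (in_box_apery (box_vecs_in_box sC fin)) Sx fx.
exists (fun l => f l + single ord0 ((x - wsum f) %/ m) l); split.
  by rewrite wsumD wsum_single divnK // subnKC.
move=> l; rewrite /single; case: (eqVneq l ord0) => [->|l0] //=; rewrite addn0 => fl.
by apply: contraT => lC; rewrite ((box_vecsP C f).1 fin).1 in fl.
Qed.

Lemma greedy_step : rest C != [::] ->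
  exists j, [/\ j \in rest C, rest_prod (rcons C j) %| g j &
    exists mu, (gam j).+1 * g j = wsum mu /\
      (forall l, mu l != 0 -> (l == ord0) || (l \in C))].
Proof.
move=> Rne; have [j jR dj] := rest_factor Rne.
exists j; split => //; last exact: rest_prod_rep (S_mul_gen _ _) dj.
by move: dj; rewrite (rest_prod_rcons jR) dvdn_pmul2l.
Qed.

End Greedy.

Definition triangular (C : seq 'I_n.+1) := forall p, p < size C ->
  exists mu, (gam (nth ord0 C p)).+1 * g (nth ord0 C p) = wsum mu /\
    (forall l, mu l != 0 -> (l == ord0) || (l \in take p C)).

Lemma triangular_rcons C j mu : triangular C -> (gam j).+1 * g j = wsum mu ->
  (forall l, mu l != 0 -> (l == ord0) || (l \in C)) -> triangular (rcons C j).
Proof.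
move=> HC Ej Hj p; rewrite size_rcons ltnS leq_eqVlt => /orP[/eqP ->|pk].
  by exists mu; rewrite nth_rcons ltnn eqxx -cats1 take_size_cat.
have [mu' [E' H']] := HC p pk.
by exists mu'; rewrite nth_rcons pk -cats1 takel_cat ?(ltnW pk).
Qed.

Lemma triangular_chain k : k <= n -> exists C : seq 'I_n.+1,
  [/\ uniq C, {subset C <= gens}, size C = k,
      forall i, i \in C -> rest_prod C %| g i & triangular C].
Proof.
elim: k => [|k IH] kn; first by exists [::]; split => // p.
have [C [uC sC szC Cdvd HC]] := IH (ltnW kn).
have Rne : rest C != [::] by rewrite -size_eq0 size_rest // szC; lia.
have [j [jR dj [mu [Emu Hmu]]]] := greedy_step uC sC Cdvd Rne.
have [jC jN] : j \notin C /\ j \in gens by move: jR; rewrite mem_filter => /andP.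
exists (rcons C j); split.
- by rewrite rcons_uniq jC uC.
- by move=> i; rewrite mem_rcons inE => /orP[/eqP ->|/sC].
- by rewrite size_rcons szC.
- move=> i; rewrite mem_rcons inE => /orP[/eqP -> //|iC].
  by apply: dvdn_trans (Cdvd i iC); rewrite (rest_prod_rcons jR) dvdn_mull.
- exact: triangular_rcons HC Emu Hmu.
Qed.

Lemma triangular_relations : exists (C : seq 'I_n.+1) (lam : 'I_n.+1 -> 'I_n.+1 -> nat),
  [/\ uniq C, size C = n, ord0 \notin C,
      forall i, i != ord0 -> (gam i).+1 * g i = wsum (lam i)
    & forall i l, i != ord0 -> l != ord0 -> lam i l != 0 -> index l C < index i C].
Proof.
have [C [uC sC szC _ HC]] := triangular_chain (leqnn n).
have allC i : i != ord0 -> i \in C.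
  move=> i0; have /size0nil R0 : size (rest C) = 0 by rewrite size_rest // szC subnn.
  apply: contraT => iC; suff : i \in rest C by rewrite R0.
  by rewrite mem_filter iC mem_gens.
have rel i : exists mu, i != ord0 -> (gam i).+1 * g i = wsum mu /\
    (forall l, mu l != 0 -> (l == ord0) || (l \in take (index i C) C)).
  case: (eqVneq i ord0) => [->|i0]; first by exists (fun _ => 0).
  have iC : index i C < size C by rewrite index_mem allC.
  have [mu [E H]] := HC _ iC.
  by exists mu => _; rewrite nth_index ?allC in E.
have [lam Hlam] := fin_all_exists rel.
exists C, lam; split => // [|i i0|i l i0 l0 nz].
- by apply/negP => /sC; rewrite mem_gens eqxx.
- by rewrite (Hlam i i0).1.
by have := (Hlam i i0).2 l nz; rewrite (negPf l0) /= in_take ?allC.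
Qed.

End Rectangular.
End Apery.

Lemma perm_of_enum n (C : seq 'I_n.+1) : uniq C -> size C = n -> ord0 \notin C ->
  exists sigma : 'S_n.+1, sigma ord0 = ord0 /\
    forall i : 'I_n.+1, i != ord0 -> index (sigma i) C = i.-1.
Proof.
move=> uC szC C0.
have lt_n (i : 'I_n.+1) : i != ord0 -> i.-1 < n by rewrite ord_neq0; have := ltn_ord i; lia.
have nth0 p : p < n -> nth ord0 C p != ord0.
  by move=> pn; apply: contraNneq C0 => <-; rewrite mem_nth ?szC.
pose f (i : 'I_n.+1) : 'I_n.+1 := if i == ord0 then ord0 else nth ord0 C i.-1.
have finj : injective f.
  move=> i i'; rewrite /f.
  case: (eqVneq i ord0) => [->|i0]; case: (eqVneq i' ord0) => [->|i'0] //.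
  - by move=> E; have := nth0 _ (lt_n _ i'0); rewrite -E eqxx.
  - by move=> E; have := nth0 _ (lt_n _ i0); rewrite E eqxx.
  move/eqP; rewrite nth_uniq ?szC ?lt_n // => /eqP E; apply: val_inj => /=.
  by move: i0 i'0 E; rewrite !ord_neq0; lia.
exists (perm finj); split => [|i i0]; rewrite permE /f ?eqxx // (negPf i0).
by rewrite index_uniq ?szC ?lt_n.
Qed.

Theorem mainTheorem3 (n : nat) (S : pred nat) (g : 'I_n.+1 -> nat)
    (gam : 'I_n.+1 -> nat) :
  numerical_semigroup S ->
  minimal_generators S g ->
  (forall i : 'I_n.+1, i != ord0 -> is_gamma S (g ord0) g i (gam i)) ->
  gamma_rectangular S g gam ->
  exists lam : 'I_n.+1 -> 'I_n.+1 -> nat,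
    (forall i : 'I_n.+1, i != ord0 ->
       (gam i + 1) * g i = \sum_(j < n.+1) lam i j * g j) /\
    exists sigma : 'S_n.+1,
      sigma ord0 = ord0 /\
      (forall i j : 'I_n.+1, i != ord0 -> i <= j -> lam (sigma i) (sigma j) = 0).
Proof.
move=> HS Hg Hgam Hrect.
have [C [lam [uC szC C0 Hrel Htri]]] := triangular_relations HS Hg Hgam Hrect.
have [sigma [s0 sidx]] := perm_of_enum uC szC C0.
have sigma_ne0 i : i != ord0 -> sigma i != ord0 by rewrite -{2}s0 (inj_eq perm_inj).
exists lam; split=> [i i0|]; first by rewrite addn1 Hrel.
exists sigma; split=> // i j i0 ij; have j0 : j != ord0 by move: i0; rewrite !ord_neq0; lia.
apply/eqP; apply: contraT => nz.
have := Htri _ _ (sigma_ne0 i i0) (sigma_ne0 j j0) nz; rewrite !sidx //.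
by move: i0 j0; rewrite !ord_neq0; lia.
Qed.
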